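(* The structure $\mathcal{W}(I)$ is positive-model-complete in the signature $\{\cup,\cap,\bot,c_0,\min,\max,\mathrm{ips}\}$. That is, every first-order formula in this signature is equivalent in $\mathcal{W}(I)$ to a positive existential formula.
   Context: Let $I$ be a dense linear order with left endpoint $0$ and no right endpoint. $\mathcal{W}(I)$ is the structure whose universe is the set of finite subsets of $I$, interpreted as follows. - $\cup$ and $\cap$ are union and intersection. - $\bot$ is $\emptyset$, and $c_0$ is $\{0\}$. - $\min$ and $\max$ send a nonempty finite set to the singleton of its minimum, respectively maximum, and both fix $\emptyset$. - $\mathrm{ips}(A,B)=\{i\in A: s_A(i)\in B\}$, where $s_A$ is the successor function of the finite linear order $A$. A positive existential formula is one built from atomic formulas using only $\wedge$, $\vee$ and $\exists$. *)

From HB Require Import structures.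
From mathcomp Require Import all_boot all_order.
From mathcomp Require Import finmap.
Set Implicit Arguments. Unset Strict Implicit. Unset Printing Implicit Defensive.
Import Order.TTheory.
Local Open Scope order_scope.
Local Open Scope fset_scope.

Definition dense_lo_left0_noright {d : Order.disp_t} (I : orderType d) (z : I) : Prop :=
  [/\ (forall x : I, z <= x),
      (forall x y : I, x < y -> exists w : I, x < w /\ w < y)
    & (forall x : I, exists y : I, x < y)].

Section W.
Context {d : Order.disp_t} {I : orderType d}.

Definition Wsorted (A : {fset I}) : seq I := sort <=%O (enum_fset A).

Definition Wmin (A : {fset I}) : {fset I} :=
  if Wsorted A is x :: _ then [fset x] else fset0.
Definition Wmax (A : {fset I}) : {fset I} :=
  if Wsorted A is x :: s then [fset last x s] else fset0.

(** successor of i in the finite linear order A (only meaningful for i in A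
    that is not the maximum). *)
Definition Whas_succ (A : {fset I}) (i : I) : bool :=
  (index i (Wsorted A)).+1 < size (Wsorted A).
Definition Wsucc (A : {fset I}) (i : I) : I :=
  nth i (Wsorted A) (index i (Wsorted A)).+1.

Definition Wips (A B : {fset I}) : {fset I} :=
  [fset i in A | Whas_succ A i && (Wsucc A i \in B)].
End W.

(** Syntax of the signature {cup, cap, bot, c0, min, max, ips};
    variables are de Bruijn indices. *)
Inductive wterm : Type :=
  | TVar : nat -> wterm
  | TBot : wterm
  | TC0 : wterm
  | TCup : wterm -> wterm -> wterm
  | TCap : wterm -> wterm -> wterm
  | TMin : wterm -> wterm
  | TMax : wterm -> wterm
  | TIps : wterm -> wterm -> wterm.

Inductive wform : Type :=
  | FEq : wterm -> wterm -> wform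
  | FNot : wform -> wform
  | FAnd : wform -> wform -> wform
  | FOr : wform -> wform -> wform
  | FImp : wform -> wform -> wform
  | FEx : wform -> wform
  | FAll : wform -> wform.

Fixpoint pos_ex (f : wform) : bool :=
  match f with
  | FEq _ _ => true
  | FAnd f g | FOr f g => pos_ex f && pos_ex g
  | FEx f => pos_ex f
  | _ => false
  end.

Definition scons {T : Type} (a : T) (e : nat -> T) : nat -> T :=
  fun n => if n is n'.+1 then e n' else a.

Section Sem.
Context {d : Order.disp_t} {I : orderType d} (z : I).

Fixpoint teval (e : nat -> {fset I}) (t : wterm) : {fset I} :=
  match t with
  | TVar n => e n
  | TBot => fset0
  | TC0 => [fset z]
  | TCup t1 t2 => teval e t1 `|` teval e t2
  | TCap t1 t2 => teval e t1 `&` teval e t2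
  | TMin t1 => Wmin (teval e t1)
  | TMax t1 => Wmax (teval e t1)
  | TIps t1 t2 => Wips (teval e t1) (teval e t2)
  end.

Fixpoint holds (e : nat -> {fset I}) (f : wform) : Prop :=
  match f with
  | FEq t1 t2 => teval e t1 = teval e t2
  | FNot g => ~ holds e g
  | FAnd g h => holds e g /\ holds e h
  | FOr g h => holds e g \/ holds e h
  | FImp g h => holds e g -> holds e h
  | FEx g => exists a : {fset I}, holds (scons a e) g
  | FAll g => forall a : {fset I}, holds (scons a e) g
  end.
End Sem.

(** Fix a valuation [e] of the variables [0 .. n-1] and a finite set [P] containing
    [0] and every [e i]. Listing [P] increasingly and labelling each point by its
    memberships in [e 0 .. e (n-1)] gives a word, and every formula is decided by a
    finite automaton reading this word, independently of the choice of [P].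
    Equations between terms come from products of small automata for the basic
    operations, connectives from complement and product. An existential
    quantifier becomes a subset construction that may also guess witness points
    outside [P]: by density and the absence of a right endpoint such points can
    always be inserted between or after the points of [P], and since [0] is least
    none is ever needed before [P].
    Conversely, acceptance by an automaton is positive existential: quantify a
    partition of the support by letters and one by states, and require, with
    [ips] and [max], that the state at every point is the transition from the
    state at its successor (from the start state at the maximum), and that the
    state at [0] is accepting. *)
From mathcomp Require Import all_boot all_order.
From mathcomp Require Import finmap.
From Stdlib Require Import Classical FunctionalExtensionality.
Set Implicit Arguments. Unset Strict Implicit. Unset Printing Implicit Defensive.
Import Order.TTheory.
Local Open Scope order_scope.
Local Open Scope fset_scope.

Section SortedEnumeration.
Context {d : Order.disp_t} {I : orderType d}.
Implicit Types (A B P : {fset I}) (s : seq I).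

Lemma Wsorted_lt A : sorted <%O (Wsorted A).
Proof. by rewrite /Wsorted sort_lt_sorted fset_uniq. Qed.

Lemma Wsorted_uniq A : uniq (Wsorted A).
Proof. exact: lt_sorted_uniq (Wsorted_lt A). Qed.

Lemma mem_Wsorted A x : (x \in Wsorted A) = (x \in A).
Proof. by rewrite /Wsorted mem_sort. Qed.

Lemma Wsorted_eq A s : sorted <%O s -> s =i A -> Wsorted A = s.
Proof.
move=> ss eqs; apply: lt_sorted_eq => //; first exact: Wsorted_lt.
by move=> x; rewrite mem_Wsorted eqs.
Qed.

Lemma Wsorted_inj : injective (@Wsorted _ I).
Proof. by move=> A B E; apply/fsetP => x; rewrite -!mem_Wsorted E. Qed.

Lemma Wsorted_fsubset A P : A `<=` P -> Wsorted A = [seq x <- Wsorted P | x \in A].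
Proof.
move=> /fsubsetP AP; apply: Wsorted_eq.
  by apply: sorted_filter; [exact: lt_trans | exact: Wsorted_lt].
by move=> x; rewrite mem_filter mem_Wsorted /=; case xA: (x \in A) => //=; rewrite AP.
Qed.

Lemma Wsorted_fset_seq s : sorted <%O s -> Wsorted [fset x in s] = s.
Proof. by move=> ss; apply: Wsorted_eq => // x; rewrite in_fset. Qed.

Lemma Wsorted0 : Wsorted (fset0 : {fset I}) = [::].
Proof. exact: Wsorted_eq. Qed.

Lemma Wsorted1 (a : I) : Wsorted [fset a] = [:: a].
Proof. by apply: Wsorted_eq => // x; rewrite in_fset1 mem_seq1. Qed.

Lemma Wsorted_bottom (z : I) P : (forall x : I, z <= x) -> z \in P ->
  Wsorted P = z :: behead (Wsorted P).
Proof.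
move=> Hz; rewrite -mem_Wsorted; have := Wsorted_lt P.
case: (Wsorted P) => // a s /= sas; rewrite in_cons => /orP[/eqP-> // | zs].
have := order_path_min lt_trans sas => /allP /(_ z zs) az.
by have := Hz a; rewrite leNgt az.
Qed.

Lemma eq_fset_Wsorted A B P : A `<=` P ->
  (A = B <-> [seq x <- Wsorted P | x \in A] = Wsorted B).
Proof. by move=> AP; rewrite -Wsorted_fsubset //; split => [-> | /Wsorted_inj]. Qed.

End SortedEnumeration.

Section SeqOps.
Context {T : eqType}.
Implicit Types (x y : pred T) (s : seq T).

Fixpoint ips_seq y s :=
  match s with
  | a :: ((b :: _) as s') => if y b then a :: ips_seq y s' else ips_seq y s'
  | _ => [::]
  end.

Definition last_seq s := if s is a :: s' then [:: last a s'] else [::].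

Lemma ips_seq_sub y s : {subset ips_seq y s <= s}.
Proof.
elim: s => // a [|b s] IH //= q.
case: (y b) => [|/IH]; rewrite ?in_cons; last by move=> ->; rewrite orbT.
by case/orP=> [-> // | /IH]; rewrite in_cons => ->; rewrite orbT.
Qed.

Lemma index_cat_uniq pre (p : T) s : uniq (pre ++ p :: s) -> index p (pre ++ p :: s) = size pre.
Proof.
rewrite cat_uniq => /and3P[_ /hasPn pn _].
rewrite index_cat /= eqxx addn0; case: ifP => // ppre.
by have := pn p (mem_head _ _); rewrite ppre.
Qed.

Lemma split_at_index s (p : T) : p \in s -> s = take (index p s) s ++ p :: drop (index p s).+1 s.
Proof.
move=> ps; have := cat_take_drop (index p s) s.
by rewrite (drop_nth p) ?index_mem // nth_index.
Qed.

End SeqOps.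

Section SortedOperations.
Context {d : Order.disp_t} {I : orderType d}.
Implicit Types (A B P : {fset I}).

Lemma Wsorted_Wmin A : Wsorted (Wmin A) = take 1 (Wsorted A).
Proof. by rewrite /Wmin; case: (Wsorted A) => [|a s] /=; rewrite ?Wsorted0 ?Wsorted1 ?take0. Qed.

Lemma Wsorted_Wmax A : Wsorted (Wmax A) = last_seq (Wsorted A).
Proof. by rewrite /Wmax; case: (Wsorted A) => [|a s] /=; rewrite ?Wsorted0 ?Wsorted1. Qed.

Lemma filter_succ_in B (s : seq I) : uniq s ->
  [seq i <- s | ((index i s).+1 < size s)%N && (nth i s (index i s).+1 \in B)] =
  ips_seq (mem B) s.
Proof.
elim: s => // a s IH /= /andP[as_ us]; rewrite eqxx /=.
rewrite (@eq_in_filter _ _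
  (fun i => ((index i s).+1 < size s)%N && (nth i s (index i s).+1 \in B))).
  by rewrite IH //; case: s {IH as_ us}.
by move=> i is_; rewrite /=; case: eqP => [E|_] //; move: as_; rewrite E is_.
Qed.

Lemma Wsorted_Wips A B : Wsorted (Wips A B) = ips_seq (mem B) (Wsorted A).
Proof.
rewrite -filter_succ_in ?Wsorted_uniq //; apply: Wsorted_eq.
  by apply: sorted_filter; [exact: lt_trans | exact: Wsorted_lt].
by move=> x; rewrite mem_filter /Wips !inE mem_Wsorted andbC.
Qed.

Lemma in_Wips A B i : (i \in Wips A B) = [&& i \in A, Whas_succ A i & Wsucc A i \in B].
Proof. by rewrite /Wips !inE. Qed.

Lemma Wsucc_cat P pre p p' s : pre ++ p :: p' :: s = Wsorted P ->
  Whas_succ P p /\ Wsucc P p = p'.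
Proof.
move=> E; have U := Wsorted_uniq P; rewrite -E in U.
rewrite /Whas_succ /Wsucc -E index_cat_uniq // size_cat /= ltEnat /=; split.
  by rewrite -addn2 leq_add2l.
by rewrite nth_cat ltnNge leqnSn /= subSn // subnn.
Qed.

Lemma Wmax_rcons P s x : Wsorted P = rcons s x -> Wmax P = [fset x].
Proof. by rewrite /Wmax => ->; case: s => [|y s] //=; rewrite last_rcons. Qed.

Lemma mem_Wmax_rcons P pre p : rcons pre p = Wsorted P -> p \in Wmax P.
Proof. by move=> E; rewrite (Wmax_rcons (esym E)) in_fset1. Qed.

Lemma notin_Wmax_cat P pre p p' s : pre ++ p :: p' :: s = Wsorted P -> p \notin Wmax P.
Proof.
move=> E; have U := Wsorted_uniq P; rewrite -E cat_uniq /= in U.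
case/and3P: U => _ _ /andP[pNs _].
case/lastP: s E pNs => [|s x] E pNs.
  rewrite (@Wmax_rcons _ (pre ++ [:: p]) p') ?in_fset1; last by rewrite -E rcons_cat.
  by apply: contra pNs => /eqP->; rewrite mem_head.
rewrite (@Wmax_rcons _ (pre ++ p :: p' :: s) x) ?in_fset1; last by rewrite -E rcons_cat.
by apply: contra pNs => /eqP->; rewrite !in_cons mem_rcons mem_head !orbT.
Qed.

Lemma mem_Wmax P p : p \in Wmax P -> p \in P.
Proof.
move=> pM; rewrite -mem_Wsorted; move: pM; rewrite /Wmax; case: (Wsorted P) => [|x s] //=.
by rewrite in_fset1 => /eqP ->; rewrite mem_last.
Qed.

End SortedOperations.

(** Words are read from their last letter to their first, so that runs are
    [foldr]s; the words below list the points of a finite set in increasing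
    order, hence are read from the maximum down to [0]. *)
Record dfa := Dfa {
  dfa_state : finType;
  dfa_step : seq bool -> dfa_state -> dfa_state;
  dfa_start : dfa_state;
  dfa_accept : pred dfa_state }.
Arguments dfa_step : clear implicits.
Arguments dfa_start : clear implicits.
Arguments dfa_accept : clear implicits.

Definition run (D : dfa) (w : seq (seq bool)) := foldr (dfa_step D) (dfa_start D) w.
Definition accepts (D : dfa) (w : seq (seq bool)) := dfa_accept D (run D w).

Definition dfa_compl (D : dfa) :=
  @Dfa (dfa_state D) (dfa_step D) (dfa_start D) (predC (dfa_accept D)).

Definition dfa_prod (op : bool -> bool -> bool) (D1 D2 : dfa) :=
  @Dfa (dfa_state D1 * dfa_state D2)%type
    (fun a q => (dfa_step D1 a q.1, dfa_step D2 a q.2))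
    (dfa_start D1, dfa_start D2)
    (fun q => op (dfa_accept D1 q.1) (dfa_accept D2 q.2)).

Definition dfa_relabel (idx : seq nat) (D : dfa) :=
  @Dfa (dfa_state D) (fun a q => dfa_step D (map (nth false a) idx) q)
    (dfa_start D) (dfa_accept D).

Lemma accepts_compl D w : accepts (dfa_compl D) w = ~~ accepts D w.
Proof. by []. Qed.

Lemma run_prod op D1 D2 w : run (dfa_prod op D1 D2) w = (run D1 w, run D2 w).
Proof. by rewrite /run; elim: w => //= a w ->. Qed.

Lemma accepts_prod op D1 D2 w : accepts (dfa_prod op D1 D2) w = op (accepts D1 w) (accepts D2 w).
Proof. by rewrite /accepts run_prod. Qed.

Lemma accepts_relabel idx D w :
  accepts (dfa_relabel idx D) w = accepts D (map (fun a => map (nth false a) idx) w).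
Proof. by rewrite /accepts /run /=; congr (dfa_accept D _); elim: w => //= a w ->. Qed.

Section Recognition.
Context {d : Order.disp_t} {I : orderType d} (z : I).
Implicit Types (e : nat -> {fset I}) (P : {fset I}).

Definition letter n e (p : I) : seq bool := [seq p \in e i | i <- iota 0 n].
Definition word n e P := map (letter n e) (Wsorted P).

Definition recognizes n D (R : (nat -> {fset I}) -> Prop) :=
  forall e P, z \in P -> (forall i, (i < n)%N -> e i `<=` P) ->
    (accepts D (word n e P) <-> R e).

Lemma recognizes_iff n D R R' : recognizes n D R -> (forall e, R e <-> R' e) -> recognizes n D R'.
Proof. by move=> DR RR' e P zP eP; rewrite -RR'; apply: DR. Qed.

Lemma recognizes_compl n D R : recognizes n D R -> recognizes n (dfa_compl D) (fun e => ~ R e).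
Proof.
move=> DR e P zP eP; rewrite accepts_compl -(DR e P zP eP).
by case: (accepts D _); split.
Qed.

Lemma recognizes_prod n (op : bool -> bool -> bool) (Op : Prop -> Prop -> Prop) D1 D2 R1 R2 :
  (forall (b1 b2 : bool) (P1 P2 : Prop), (b1 <-> P1) -> (b2 <-> P2) -> (op b1 b2 <-> Op P1 P2)) ->
  recognizes n D1 R1 -> recognizes n D2 R2 ->
  recognizes n (dfa_prod op D1 D2) (fun e => Op (R1 e) (R2 e)).
Proof.
by move=> opOp DR1 DR2 e P zP eP; rewrite accepts_prod; apply: opOp; [apply: DR1 | apply: DR2].
Qed.

Lemma size_letter n e p : size (letter n e p) = n.
Proof. by rewrite size_map size_iota. Qed.

Lemma nth_letter n e p i : (i < n)%N -> nth false (letter n e p) i = (p \in e i).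
Proof. by move=> iN; rewrite (nth_map 0%N) ?size_iota // nth_iota. Qed.

Lemma letter_scons n a e p : letter n.+1 (scons a e) p = (p \in a) :: letter n e p.
Proof. by rewrite /letter /= (iotaDl 1 0) -map_comp. Qed.

Lemma letter_outside n e P p : (forall i, (i < n)%N -> e i `<=` P) ->
  p \notin P -> letter n e p = nseq n false.
Proof.
move=> eP pP; apply: (@eq_from_nth _ false) => [|i]; rewrite size_letter ?size_nseq // => iN.
rewrite nth_letter // nth_nseq iN; apply/negbTE; apply: contra pP.
exact: (fsubsetP (eP i iN)).
Qed.

Lemma letter_relabel n e (idx : seq nat) p : all (fun j => (j < n)%N) idx ->
  map (nth false (letter n e p)) idx = letter (size idx) (fun i => e (nth 0%N idx i)) p.
Proof.
move=> /allP idxn; apply: (@eq_from_nth _ false) => [|i]; rewrite size_map ?size_letter // => iS.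
by rewrite nth_letter // (nth_map 0%N) // nth_letter // idxn // mem_nth.
Qed.

Lemma recognizes_relabel m n (idx : seq nat) D R : size idx = m -> all (fun j => (j < n)%N) idx ->
  recognizes m D R -> recognizes n (dfa_relabel idx D) (fun e => R (fun i => e (nth 0%N idx i))).
Proof.
move=> sz idxn DR e P zP eP; rewrite accepts_relabel.
have -> : map (fun a => map (nth false a) idx) (word n e P) = word m (fun i => e (nth 0%N idx i)) P.
  by rewrite /word -map_comp -sz; apply: eq_map => p /=; exact: letter_relabel.
by apply: DR => // i; rewrite -sz => iS; apply: eP; apply: (allP idxn); exact: mem_nth.
Qed.

End Recognition.

(** Automata for the equations [X = op Y Z], reading letters [[:: x; y; w]] that
    record membership in [X], [Y] and [Z]. *)
Definition dfa3 (S : finType) (f : bool -> bool -> bool -> S -> S) (s0 : S) (acc : pred S) :=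
  @Dfa S (fun a q => f (nth false a 0) (nth false a 1) (nth false a 2) q) s0 acc.

Definition dfa_pointwise (g : bool -> bool -> bool) :=
  @dfa3 bool (fun x y w ok => (x == g y w) && ok) true id.
Definition dfa_c0 :=
  @dfa3 (bool * bool)%type (fun x _ _ q => (x && q.2, ~~ x && q.2)) (true, true) fst.
Definition dfa_min := @dfa3 (bool * bool)%type
  (fun x y _ q => (if y then x && q.2 else ~~ x && q.1, ~~ x && q.2)) (true, true) fst.
Definition dfa_max := @dfa3 (bool * bool)%type
  (fun x y _ q => ((if q.2 then ~~ x else x == y) && q.1, y || q.2)) (true, false) fst.
Definition dfa_ips := @dfa3 (option bool * bool)%type
  (fun x y w q => (if y then Some w else q.1, (x == (y && (q.1 == Some true))) && q.2))
  (None, true) snd.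

Section BasicRuns.
Context {T : eqType}.
Implicit Types (x y w : pred T) (s t : seq T).

Lemma cons_neq (p : T) s t : p \notin t -> (p :: s == t) = false.
Proof. by move=> pt; apply/negbTE; apply: contraNneq pt => <-; rewrite mem_head. Qed.

Lemma neq_cons (p : T) s t : p \notin s -> (s == p :: t) = false.
Proof. by move=> ps; rewrite eq_sym cons_neq. Qed.

Lemma notin_filter x (p : T) s : p \notin s -> p \notin filter x s.
Proof. by apply: contra; rewrite mem_filter => /andP[]. Qed.

Lemma foldr_pointwise (g : bool -> bool -> bool) x y w s :
  foldr (fun p ok => (x p == g (y p) (w p)) && ok) true s = all (fun p => x p == g (y p) (w p)) s.
Proof. by elim: s => //= p s ->. Qed.

Lemma foldr_c0 x s : uniq s ->
  foldr (fun p (q : bool * bool) => (x p && q.2, ~~ x p && q.2)) (true, true) s =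
  (filter x s == take 1 s, filter x s == [::]).
Proof.
elim: s => //= p s IH /andP[ps us]; rewrite IH //=.
by case: (x p) => /=; rewrite ?take0 ?eqseq_cons ?eqxx ?neq_cons ?notin_filter.
Qed.

Lemma foldr_min x y s : uniq s ->
  foldr (fun p (q : bool * bool) => (if y p then x p && q.2 else ~~ x p && q.1, ~~ x p && q.2))
     (true, true) s =
  (filter x s == take 1 (filter y s), filter x s == [::]).
Proof.
elim: s => //= p s IH /andP[ps us]; rewrite IH //=.
have pxs := notin_filter x ps.
have pys : p \notin take 1 (filter y s) by apply: contra (notin_filter y ps); apply: mem_take.
by case: (y p); case: (x p) => //=; rewrite ?take0 ?eqseq_cons ?eqxx ?neq_cons ?cons_neq.
Qed.

Lemma foldr_max x y s : uniq s ->
  foldr (fun p (q : bool * bool) => ((if q.2 then ~~ x p else x p == y p) && q.1, y p || q.2))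
     (true, false) s =
  (filter x s == last_seq (filter y s), has y s).
Proof.
elim: s => //= p s IH /andP[ps us]; rewrite IH //=.
have pxs := notin_filter x ps.
rewrite has_filter; have := notin_filter y ps; case: (filter y s) => [|a l] /= pys.
  by case: (y p); case: (x p) => //=; rewrite ?eqseq_cons ?eqxx ?neq_cons ?cons_neq.
have pl : p \notin [:: last a l] by rewrite mem_seq1; apply: contra pys => /eqP ->; exact: mem_last.
by case: (y p); case: (x p) => //=; rewrite ?cons_neq.
Qed.

Definition first_label y w s := if filter y s is b :: _ then Some (w b) else None.

Lemma foldr_ips x y w s : uniq s ->
  foldr (fun p (q : option bool * bool) =>
     (if y p then Some (w p) else q.1, (x p == (y p && (q.1 == Some true))) && q.2))
     (None, true) s =
  (first_label y w s, filter x s == ips_seq w (filter y s)).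
Proof.
elim: s => //= p s IH /andP[ps us]; rewrite IH //= /first_label /=.
have pxs := notin_filter x ps.
have pis : p \notin ips_seq w (filter y s) by apply: contra (notin_filter y ps); apply: ips_seq_sub.
case: (y p) => /=; last by case: (x p) => //=; rewrite ?cons_neq.
move: pis; case: (filter y s) => [|b l] pis /=; first by case: (x p).
by case: (w b); case: (x p) => //=; rewrite ?eqseq_cons ?eqxx ?cons_neq ?neq_cons.
Qed.

End BasicRuns.

Section BasicRecognition.
Context {d : Order.disp_t} {I : orderType d} (z : I) (Hz : forall x : I, z <= x).

Lemma accepts_dfa3 (S : finType) f (s0 : S) acc e (P : {fset I}) :
  accepts (dfa3 f s0 acc) (word 3 e P) =
  acc (foldr (fun p q => f (p \in e 0%N) (p \in e 1%N) (p \in e 2%N) q) s0 (Wsorted P)).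
Proof. by rewrite /accepts /run /word foldr_map. Qed.

Lemma recognizes_pointwise (g : bool -> bool -> bool) (op : {fset I} -> {fset I} -> {fset I}) :
  g false false = false -> (forall Y Z p, (p \in op Y Z) = g (p \in Y) (p \in Z)) ->
  recognizes z 3 (dfa_pointwise g) (fun e => e 0%N = op (e 1%N) (e 2%N)).
Proof.
move=> g0 opg e P zP eP; rewrite accepts_dfa3 /= foldr_pointwise; split; last first.
  by move=> ->; apply/allP => p _; rewrite opg.
move=> /allP eq_in; apply/fsetP => p; rewrite opg.
case pP: (p \in P); first by apply/eqP; apply: eq_in; rewrite mem_Wsorted.
have eN i : (i < 3)%N -> (p \in e i) = false.
  by move=> /eP /fsubsetP eiP; apply/negbTE; apply: contraFN pP; apply: eiP.
by rewrite !eN.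
Qed.

Lemma recognizes_c0 : recognizes z 3 dfa_c0 (fun e => e 0%N = [fset z]).
Proof.
move=> e P zP eP; rewrite accepts_dfa3 foldr_c0 ?Wsorted_uniq //=.
rewrite (eq_fset_Wsorted _ (eP 0%N isT)) Wsorted1 [in take _ _](Wsorted_bottom Hz zP) /=.
by rewrite take0; split => /eqP.
Qed.

Lemma recognizes_min : recognizes z 3 dfa_min (fun e => e 0%N = Wmin (e 1%N)).
Proof.
move=> e P zP eP; rewrite accepts_dfa3 foldr_min ?Wsorted_uniq //=.
rewrite (eq_fset_Wsorted _ (eP 0%N isT)) Wsorted_Wmin (Wsorted_fsubset (eP 1%N isT)).
by split => /eqP.
Qed.

Lemma recognizes_max : recognizes z 3 dfa_max (fun e => e 0%N = Wmax (e 1%N)).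
Proof.
move=> e P zP eP; rewrite accepts_dfa3 foldr_max ?Wsorted_uniq //=.
rewrite (eq_fset_Wsorted _ (eP 0%N isT)) Wsorted_Wmax (Wsorted_fsubset (eP 1%N isT)).
by split => /eqP.
Qed.

Lemma recognizes_ips : recognizes z 3 dfa_ips (fun e => e 0%N = Wips (e 1%N) (e 2%N)).
Proof.
move=> e P zP eP; rewrite accepts_dfa3 foldr_ips ?Wsorted_uniq //=.
rewrite (eq_fset_Wsorted _ (eP 0%N isT)) Wsorted_Wips (Wsorted_fsubset (eP 1%N isT)).
by split => /eqP.
Qed.

End BasicRecognition.

Definition pad_letter n : seq bool := true :: nseq n false.

(** Points of the witness lying outside the support read as [pad_letter n]; the
    closure lets any number of them occur right after each point of the support. *)
Section ExistsAutomaton.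
Variables (D : dfa) (n : nat).
Implicit Types (S : {set dfa_state D}) (q : dfa_state D).

Definition pad_closure S : {set dfa_state D} :=
  [set q' | [exists q in S, fconnect (dfa_step D (pad_letter n)) q q']].
Definition ex_step (a : seq bool) S : {set dfa_state D} :=
  [set q | [exists c : bool, exists q' in pad_closure S, q == dfa_step D (c :: a) q']].
Definition dfa_ex :=
  @Dfa {set dfa_state D}%type ex_step [set dfa_start D] (fun S => [exists q in S, dfa_accept D q]).

Lemma pad_closure_refl S q : q \in S -> q \in pad_closure S.
Proof. by move=> qS; rewrite inE; apply/existsP; exists q; rewrite qS connect0. Qed.

Lemma pad_closure_step S q : q \in pad_closure S -> dfa_step D (pad_letter n) q \in pad_closure S.
Proof.
rewrite !inE => /existsP[q0 /andP[q0S q0q]]; apply/existsP; exists q0; rewrite q0S /=.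
by apply: connect_trans q0q _; apply: connect1; rewrite /= eqxx.
Qed.

Lemma pad_closureP S q : q \in pad_closure S ->
  exists k q0, q0 \in S /\ q = iter k (dfa_step D (pad_letter n)) q0.
Proof.
rewrite inE => /existsP[q0 /andP[q0S q0q]]; exists (findex (dfa_step D (pad_letter n)) q0 q), q0.
by rewrite iter_findex.
Qed.

Lemma ex_stepP a S q :
  reflect (exists c q', q' \in pad_closure S /\ q = dfa_step D (c :: a) q') (q \in ex_step a S).
Proof.
rewrite inE; apply: (iffP existsP) => [[c /existsP[q' /andP[q'S /eqP ->]]] | [c [q' [q'S ->]]]].
  by exists c, q'.
by exists c; apply/existsP; exists q'; rewrite q'S eqxx.
Qed.

End ExistsAutomaton.
Arguments pad_closure : clear implicits.
Arguments ex_step : clear implicits.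
Arguments dfa_ex : clear implicits.

Section Gaps.
Context {d : Order.disp_t} {I : orderType d}
  (Hdense : forall x y : I, x < y -> exists w : I, x < w /\ w < y)
  (Hright : forall x : I, exists y : I, x < y).

Definition below (ub : option I) (w : I) := if ub is Some y then w < y else true.

Lemma chain_below (x : I) ub k : below ub x ->
  exists N : seq I, [/\ size N = k, path <%O x N & all (below ub) N].
Proof.
elim: k x => [|k IH] x bx; first by exists [::].
have [w [xw bw]] : exists w, x < w /\ below ub w.
  by clear IH; move: bx; case: ub => [y|] /= bx; [exact: Hdense | have [w xw] := Hright x; exists w].
have [N [sN pN aN]] := IH w bw.
by exists (w :: N); rewrite /= sN xw pN bw aN.
Qed.

Lemma notin_gap (P : {fset I}) pre x s w : pre ++ x :: s = Wsorted P ->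
  x < w -> below (ohead s) w -> w \notin P.
Proof.
move=> E xw bw; rewrite -mem_Wsorted -E; apply/negP.
have := Wsorted_lt P; rewrite -E lt_sorted_pairwise pairwise_cat pairwise_cons.
case/and4P => /allrelP lt_pre _ /allP lt_x lt_s.
rewrite mem_cat in_cons => /or3P[/lt_pre wx | /eqP wx | ws].
- by have := wx x (mem_head _ _); rewrite ltNge ltW.
- by move: xw; rewrite wx ltxx.
- clear E lt_pre; case: s lt_x lt_s bw ws => // y s _ /= /andP[/allP lt_y _] wy.
  rewrite in_cons => /orP[/eqP wy' | /lt_y yw]; first by move: wy; rewrite wy' ltxx.
  by move: wy; rewrite ltNge ltW.
Qed.

End Gaps.

Lemma uniq_map_fst_inj (A B : eqType) (t : seq (A * B)) pb pb' : uniq (map fst t) ->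
  pb \in t -> pb' \in t -> pb.1 = pb'.1 -> pb = pb'.
Proof.
elim: t => // c t IH /= /andP[ct ut]; rewrite !in_cons.
case/orP=> [/eqP-> | pt]; case/orP=> [/eqP-> | p't] //= E.
- by move: ct; rewrite E (map_f fst p't).
- by move: ct; rewrite -E (map_f fst pt).
- exact: IH.
Qed.

Section ExistsRecognition.
Context {d : Order.disp_t} {I : orderType d} (z : I) (Hz : forall x : I, z <= x)
  (Hdense : forall x y : I, x < y -> exists w : I, x < w /\ w < y)
  (Hright : forall x : I, exists y : I, x < y).

Section Runs.
Variables (D : dfa) (n : nat) (e : nat -> {fset I}) (P : {fset I}).
Hypothesis eP : forall i, (i < n)%N -> e i `<=` P.

Definition ex_states (s : seq I) := foldr (ex_step D n) [set dfa_start D] (map (letter n e) s).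

Definition pair_word (t : seq (I * bool)) := map (fun pb => pb.2 :: letter n e pb.1) t.

Lemma run_in_pad_closure (a : {fset I}) t : {subset [predD t & P] <= a} ->
  run D (map (letter n.+1 (scons a e)) t) \in pad_closure D n (ex_states (filter (mem P) t)).
Proof.
elim: t => [|p t IH] ta; first by apply: pad_closure_refl; rewrite inE.
have {}IH : run D (map (letter n.+1 (scons a e)) t) \in
    pad_closure D n (ex_states (filter (mem P) t)).
  by apply: IH => q /andP[qP qt]; apply: ta; rewrite !inE qP qt orbT.
rewrite [filter _ _]/= [map _ _]/= letter_scons; case pP: (p \in P).
  apply: pad_closure_refl; apply/ex_stepP.
  by exists (p \in a), (run D (map (letter n.+1 (scons a e)) t)).
rewrite ta ?(letter_outside eP (negbT pP)); last by rewrite !inE pP eqxx.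
exact: pad_closure_step IH.
Qed.

Lemma run_in_ex_states (a : {fset I}) p t : p \in P -> {subset [predD t & P] <= a} ->
  run D (map (letter n.+1 (scons a e)) (p :: t)) \in ex_states (filter (mem P) (p :: t)).
Proof.
move=> pP ta; rewrite [filter _ _]/= pP [map _ _]/= letter_scons; apply/ex_stepP.
exists (p \in a), (run D (map (letter n.+1 (scons a e)) t)).
by split => //; apply: run_in_pad_closure.
Qed.

Lemma run_pads (N : seq I) q : {subset N <= [predC P]} ->
  foldr (dfa_step D) q (pair_word [seq (w, true) | w <- N]) =
  iter (size N) (dfa_step D (pad_letter n)) q.
Proof.
elim: N => //= w N IH NP; rewrite IH; last by move=> v vN; apply: NP; rewrite in_cons vN orbT.
by rewrite (letter_outside eP (NP w (mem_head _ _))).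
Qed.

(** Invariant of the subset construction: [q] is reached on a word [t] that adds
    padding points, all in the witness, to the suffix [s] of the support. *)
Definition pad_witness (s : seq I) q (t : seq (I * bool)) :=
  [/\ q = run D (pair_word t),
      sorted <%O (map fst t),
      {subset s <= map fst t},
      (forall pb, pb \in t -> pb.1 \notin s -> pb.1 \notin P /\ pb.2) &
      (forall pb, pb \in t -> if s is y :: _ then y <= pb.1 else False)].

Lemma pad_witness_cons pre x s q t c k : pre ++ x :: s = Wsorted P -> pad_witness s q t ->
  exists t', pad_witness (x :: s)
    (dfa_step D (c :: letter n e x) (iter k (dfa_step D (pad_letter n)) q)) t'.
Proof.
move=> Es [Eq st sub fr ge].
have xs : path <%O x s by have := Wsorted_lt P; rewrite -Es => /cat_sorted2 [].
have bx : below (ohead s) x by case: (s) xs => //= y ? /andP[].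
have [N [sN xN Ns]] := chain_below Hdense Hright k bx.
move: xN; rewrite (path_sortedE lt_trans) => /andP[/allP xN sortN].
have NP : {subset N <= [predC P]}.
  by move=> w wN; rewrite inE (notin_gap Es (xN w wN)) ?(allP Ns).
exists ((x, c) :: [seq (w, true) | w <- N] ++ t); split.
- by rewrite Eq /run /pair_word map_cons map_cat /= foldr_cat run_pads // sN.
- rewrite /= map_cat -map_comp map_id (path_sortedE lt_trans) all_cat lt_sorted_pairwise pairwise_cat.
  rewrite -!lt_sorted_pairwise st sortN andbT (_ : all (> x) N) /=; last exact/allP.
  apply/andP; split.
  + case: (s) xs ge => [|y s'] /= xs ge; first by case: (t) ge => //= pb ? /(_ pb (mem_head _ _)).
    case/andP: xs => xy _; apply/allP => v /mapP [pb pbt ->]; exact: lt_le_trans xy (ge pb pbt).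
  + rewrite andbT; case: (s) Ns ge => [|y s'] /= Ns ge.
      by case: (t) ge => [|pb ?] /=; [rewrite allrel0r | move/(_ pb (mem_head _ _))].
    apply/allrelP => w v wN /mapP [pb pbt ->]; apply: lt_le_trans (ge pb pbt); exact: (allP Ns).
- move=> v; rewrite in_cons => /orP[/eqP-> | vs]; first exact: mem_head.
  by rewrite /= in_cons map_cat mem_cat sub ?orbT.
- move=> pb; rewrite in_cons mem_cat => /or3P[/eqP-> | /mapP[w wN ->] | pbt].
  + by rewrite /= mem_head.
  + by move=> _; have := NP w wN.
  + by rewrite in_cons negb_or => /andP[_ /(fr pb pbt)].
- move=> pb; rewrite in_cons mem_cat => /or3P[/eqP-> | /mapP[w wN ->] | pbt] //=.
  + exact/ltW/xN.
  + move: (ge pb pbt); case: (s) xs => //= y ? /andP[xy _] yp; exact: le_trans (ltW xy) yp.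
Qed.

Lemma ex_states_witness s pre q : pre ++ s = Wsorted P -> q \in ex_states s ->
  exists t, pad_witness s q t.
Proof.
elim: s pre q => [|x s IH] pre q Es; first by rewrite inE => /eqP ->; exists [::].
rewrite /ex_states /= => /ex_stepP [c [q' [q'C ->]]].
have [k [q'' [q''S ->]]] := pad_closureP q'C.
have Es' : rcons pre x ++ s = Wsorted P by rewrite cat_rcons.
have [t wt] := IH _ _ Es' q''S.
exact: pad_witness_cons Es wt.
Qed.

End Runs.

Section Quantifier.
Variables (n : nat) (D : dfa) (R : (nat -> {fset I}) -> Prop).
Hypothesis DR : recognizes z n.+1 D R.
Variables (e : nat -> {fset I}) (P : {fset I}).
Hypotheses (zP : z \in P) (eP : forall i, (i < n)%N -> e i `<=` P).

Lemma ex_accepts_sound : accepts (dfa_ex D n) (word n e P) -> exists a, R (scons a e).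
Proof.
move=> /existsP[q /andP[qS qacc]].
have [t [Eq st sub fr _]] := @ex_states_witness D n e P eP (Wsorted P) [::] q erefl qS.
pose a : {fset I} := [fset w in [seq pb.1 | pb <- t & pb.2]].
pose P' : {fset I} := [fset w in map fst t].
have PP' p : p \in P -> p \in P' by move=> pP; rewrite in_fset /= sub // mem_Wsorted.
exists a; apply/(DR _ (P := P')); first exact: PP'.
  case=> [|i] /= iN; apply/fsubsetP => w; last by move/(fsubsetP (eP iN)); apply: PP'.
  rewrite !in_fset /= => /mapP [pb]; rewrite mem_filter => /andP[_ pbt] ->; exact: map_f.
rewrite /accepts /word Wsorted_fset_seq // -map_comp.
have -> : map (letter n.+1 (scons a e) \o fst) t = pair_word n e t.
  apply/eq_in_map => pb pbt /=; rewrite letter_scons; congr (_ :: _).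
  rewrite in_fset /=; case lab: pb.2.
    by apply/mapP; exists pb => //; rewrite mem_filter lab pbt.
  apply/negbTE/negP => /mapP [pb']; rewrite mem_filter => /andP[lab' pb't] E.
  by move: lab; rewrite (uniq_map_fst_inj (lt_sorted_uniq st) pbt pb't E) lab'.
by rewrite -Eq.
Qed.

Lemma ex_accepts_complete a : R (scons a e) -> accepts (dfa_ex D n) (word n e P).
Proof.
move=> Ra; pose P' := P `|` a.
have PP' : P `<=` P' by apply: fsubsetUl.
have zP' : z \in P' by rewrite in_fsetU zP.
have DP' : accepts D (word n.+1 (scons a e) P').
  apply/(DR _ (P := P')) => //; case=> [|i] /= iN; first exact: fsubsetUr.
  exact: fsubset_trans (eP iN) PP'.
apply/existsP; exists (run D (word n.+1 (scons a e) P')); apply/andP; split; last exact: DP'.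
rewrite /word (Wsorted_fsubset PP') (Wsorted_bottom Hz zP').
apply: run_in_ex_states => // q /andP[qP /mem_behead].
by rewrite mem_Wsorted in_fsetU (negbTE qP).
Qed.

End Quantifier.

Lemma recognizes_ex n D R :
  recognizes z n.+1 D R -> recognizes z n (dfa_ex D n) (fun e => exists a, R (scons a e)).
Proof.
move=> DR e P zP eP; split; first exact: ex_accepts_sound.
by case=> a; exact: ex_accepts_complete.
Qed.

End ExistsRecognition.

Fixpoint fv_term (t : wterm) : nat :=
  match t with
  | TVar v => v.+1
  | TBot | TC0 => 0
  | TCup t1 t2 | TCap t1 t2 | TIps t1 t2 => maxn (fv_term t1) (fv_term t2)
  | TMin t | TMax t => fv_term t
  end.

Fixpoint fv_form (f : wform) : nat :=
  match f with
  | FEq t1 t2 => maxn (fv_term t1) (fv_term t2)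
  | FNot g => fv_form g
  | FAnd g h | FOr g h | FImp g h => maxn (fv_form g) (fv_form h)
  | FEx g | FAll g => (fv_form g).-1
  end.

Lemma andb_iff (b1 b2 : bool) (P1 P2 : Prop) :
  (b1 <-> P1) -> (b2 <-> P2) -> (b1 && b2 <-> P1 /\ P2).
Proof. by move=> <- <-; split => [/andP | ] [-> ->]. Qed.

Lemma orb_iff (b1 b2 : bool) (P1 P2 : Prop) :
  (b1 <-> P1) -> (b2 <-> P2) -> (b1 || b2 <-> P1 \/ P2).
Proof. by move=> <- <-; split => [/orP | [] ->] //; rewrite orbT. Qed.

Lemma implb_iff (b1 b2 : bool) (P1 P2 : Prop) :
  (b1 <-> P1) -> (b2 <-> P2) -> (implb b1 b2 <-> (P1 -> P2)).
Proof. by move=> <- <-; split => [/implyP | /implyP]. Qed.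

Section TermRecognition.
Context {d : Order.disp_t} {I : orderType d} (z : I) (Hz : forall x : I, z <= x)
  (Hdense : forall x y : I, x < y -> exists w : I, x < w /\ w < y)
  (Hright : forall x : I, exists y : I, x < y).

Let recognizes_exists := recognizes_ex Hz Hdense Hright.

(** The renaming [f] is needed because the values of subterms are held in fresh
    variables in front of the environment. *)
Definition recognizable_graph (t : wterm) :=
  forall n k (f : nat -> nat), (k < n)%N -> (forall v, (v < fv_term t)%N -> (f v < n)%N) ->
    exists D, recognizes z n D (fun e => e k = teval z (fun v => e (f v)) t).

Lemma term_graph_op2 (op : {fset I} -> {fset I} -> {fset I}) Dop t1 t2 n k (f : nat -> nat) :
  recognizes z 3 Dop (fun e => e 0%N = op (e 1%N) (e 2%N)) ->
  recognizable_graph t1 -> recognizable_graph t2 ->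
  (k < n)%N -> (forall v, (v < maxn (fv_term t1) (fv_term t2))%N -> (f v < n)%N) ->
  exists D, recognizes z n D
    (fun e => e k = op (teval z (fun v => e (f v)) t1) (teval z (fun v => e (f v)) t2)).
Proof.
move=> Dop_op IH1 IH2 kn fn.
have [D1 DR1] := IH1 n.+2 1%N (fun v => (f v).+2) isT
   (fun v Hv => fn v (leq_trans Hv (leq_maxl _ _))).
have [D2 DR2] := IH2 n.+2 0%N (fun v => (f v).+2) isT
   (fun v Hv => fn v (leq_trans Hv (leq_maxr _ _))).
have DR3 := @recognizes_relabel _ _ z 3 n.+2 [:: k.+2; 1%N; 0%N] _ _ erefl
   ltac:(by rewrite /= !ltnS kn) Dop_op.
have DR12 := recognizes_prod andb_iff DR1 DR2.
have DR := recognizes_exists (recognizes_exists (recognizes_prod andb_iff DR12 DR3)).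
eexists; apply: (recognizes_iff DR) => e /=; split; first by move=> [a [b [[-> ->] ->]]].
by move=> ->; do 2 eexists.
Qed.

Lemma term_graph_op1 (op : {fset I} -> {fset I}) Dop t1 n k (f : nat -> nat) :
  recognizes z 3 Dop (fun e => e 0%N = op (e 1%N)) ->
  recognizable_graph t1 ->
  (k < n)%N -> (forall v, (v < fv_term t1)%N -> (f v < n)%N) ->
  exists D, recognizes z n D (fun e => e k = op (teval z (fun v => e (f v)) t1)).
Proof.
move=> Dop_op IH1 kn fn.
have [D1 DR1] := IH1 n.+1 0%N (fun v => (f v).+1) isT fn.
have DR3 := @recognizes_relabel _ _ z 3 n.+1 [:: k.+1; 0%N; 0%N] _ _ erefl
   ltac:(by rewrite /= !ltnS kn) Dop_op.
have DR := recognizes_exists (recognizes_prod andb_iff DR1 DR3).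
eexists; apply: (recognizes_iff DR) => e /=; split; first by move=> [a [-> ->]].
by move=> ->; eexists.
Qed.

Lemma term_graph_recognizable t : recognizable_graph t.
Proof.
elim: t => [v|||t1 IH1 t2 IH2|t1 IH1 t2 IH2|t1 IH1|t1 IH1|t1 IH1 t2 IH2] n k f kn fn /=.
- have DR := @recognizes_pointwise _ _ z (fun y _ => y) (fun Y _ => Y) erefl (fun _ _ _ => erefl).
  have DR' := @recognizes_relabel _ _ z 3 n [:: k; f v; k] _ _ erefl ltac:(by rewrite /= kn fn) DR.
  by eexists; apply: (recognizes_iff DR') => e /=.
- have DR := @recognizes_pointwise _ _ z (fun _ _ => false) (fun _ _ => fset0) erefl (fun _ _ _ => erefl).
  have DR' := @recognizes_relabel _ _ z 3 n [:: k; k; k] _ _ erefl ltac:(by rewrite /= kn) DR.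
  by eexists; apply: (recognizes_iff DR') => e /=.
- have DR' := @recognizes_relabel _ _ z 3 n [:: k; k; k] _ _ erefl ltac:(by rewrite /= kn) (recognizes_c0 Hz).
  by eexists; apply: (recognizes_iff DR') => e /=.
- apply: (term_graph_op2 _ IH1 IH2) => //.
  exact: (@recognizes_pointwise _ _ z orb (fun Y Z => Y `|` Z) erefl (fun Y Z p => in_fsetU Y Z p)).
- apply: (term_graph_op2 _ IH1 IH2) => //.
  exact: (@recognizes_pointwise _ _ z andb (fun Y Z => Y `&` Z) erefl (fun Y Z p => in_fsetI Y Z p)).
- by apply: (term_graph_op1 _ IH1) => //; exact: recognizes_min.
- by apply: (term_graph_op1 _ IH1) => //; exact: recognizes_max.
- by apply: (term_graph_op2 _ IH1 IH2) => //; exact: recognizes_ips.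
Qed.

Lemma form_recognizable phi n :
  (fv_form phi <= n)%N -> exists D, recognizes z n D (fun e => holds z e phi).
Proof.
elim: phi n => [t1 t2|g IHg|g IHg h IHh|g IHg h IHh|g IHg h IHh|g IHg|g IHg] n /= fvn.
- have [D1 DR1] := term_graph_recognizable (t := t1) (n := n.+1) (k := 0%N) (f := succn) isT
     (fun v Hv => leq_trans Hv (leq_trans (leq_maxl _ _) fvn)).
  have [D2 DR2] := term_graph_recognizable (t := t2) (n := n.+1) (k := 0%N) (f := succn) isT
     (fun v Hv => leq_trans Hv (leq_trans (leq_maxr _ _) fvn)).
  have DR := recognizes_exists (recognizes_prod andb_iff DR1 DR2).
  eexists; apply: (recognizes_iff DR) => e /=; split; first by move=> [a [<- <-]].
  by move=> E; exists (teval z e t1); split.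
- have [D1 DR1] := IHg n fvn.
  by eexists; apply: (recognizes_compl DR1).
- have [D1 DR1] := IHg n (leq_trans (leq_maxl _ _) fvn).
  have [D2 DR2] := IHh n (leq_trans (leq_maxr _ _) fvn).
  by eexists; apply: (recognizes_prod andb_iff DR1 DR2).
- have [D1 DR1] := IHg n (leq_trans (leq_maxl _ _) fvn).
  have [D2 DR2] := IHh n (leq_trans (leq_maxr _ _) fvn).
  by eexists; apply: (recognizes_prod orb_iff DR1 DR2).
- have [D1 DR1] := IHg n (leq_trans (leq_maxl _ _) fvn).
  have [D2 DR2] := IHh n (leq_trans (leq_maxr _ _) fvn).
  by eexists; apply: (recognizes_prod implb_iff DR1 DR2).
- have [D1 DR1] := IHg n.+1 (leq_trans (leqSpred _) (fvn : _ < n.+1)%N).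
  by eexists; apply: (recognizes_exists DR1).
- have [D1 DR1] := IHg n.+1 (leq_trans (leqSpred _) (fvn : _ < n.+1)%N).
  have DR := recognizes_compl (recognizes_exists (recognizes_compl DR1)).
  eexists; apply: (recognizes_iff DR) => e /=; split; last by move=> Ha [a]; apply.
  by move=> nex a; apply: NNPP => Hna; apply: nex; exists a.
Qed.

End TermRecognition.

Definition FTrue := FEq TBot TBot.
Definition fconj (fs : seq wform) := foldr FAnd FTrue fs.
Definition tbigcup (ts : seq wterm) := foldr TCup TBot ts.

Fixpoint bool_seqs (k : nat) : seq (seq bool) :=
  if k is k'.+1 then [seq b :: w | b <- [:: true; false], w <- bool_seqs k'] else [:: [::]].

Lemma mem_bool_seqs k w : (w \in bool_seqs k) = (size w == k).
Proof.
elim: k w => [|k IH] [|b w] //; first by apply/allpairsP => -[[x y] [_ _ /=]].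
apply/allpairsP/idP => [[[x y] /= [_ yk [_ ->]]] | wk]; first by rewrite eqSS -IH.
by exists (b, w); split => //=; [case: (b) | rewrite IH -eqSS].
Qed.

Lemma pos_ex_fconj fs : pos_ex (fconj fs) = all pos_ex fs.
Proof. by elim: fs => //= f fs ->. Qed.

Lemma pos_ex_iter_FEx k f : pos_ex (iter k FEx f) = pos_ex f.
Proof. by elim: k => //= k ->. Qed.

Section FormulaSemantics.
Context {d : Order.disp_t} {I : orderType d} (z : I).
Implicit Types (E : nat -> {fset I}).

Lemma holds_fconj_map (T : eqType) E (F : T -> wform) xs :
  holds z E (fconj (map F xs)) <-> (forall x, x \in xs -> holds z E (F x)).
Proof.
elim: xs => [|x xs IH] /=; first by split.
rewrite IH; split => [[Fx Fxs] y | Fxs]; first by rewrite in_cons => /orP[/eqP-> | /Fxs].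
by split => [|y yxs]; apply: Fxs; rewrite in_cons ?eqxx ?yxs ?orbT.
Qed.

Lemma mem_teval_tbigcup E ts p :
  (p \in teval z E (tbigcup ts)) = has (fun t => p \in teval z E t) ts.
Proof. by elim: ts => //= t ts IH; rewrite in_fsetU IH. Qed.

Definition env_cat (ws : seq {fset I}) E (j : nat) :=
  if (j < size ws)%N then nth fset0 ws j else E (j - size ws)%N.

Lemma env_cat0 E : env_cat [::] E = E.
Proof. by apply: functional_extensionality => j; rewrite /env_cat subn0. Qed.

Lemma env_cat_rcons ws a E : env_cat ws (scons a E) = env_cat (rcons ws a) E.
Proof.
apply: functional_extensionality => j; rewrite /env_cat size_rcons nth_rcons.
have [jws | wsj | ->] := ltngtP j (size ws).
- by rewrite ltnS ltnW.
- by rewrite ltnS leqNgt wsj /= -(subnSK wsj).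
- by rewrite subnn ltnS leqnn /= ?eqxx.
Qed.

Lemma holds_iter_FEx E k f :
  holds z E (iter k FEx f) <-> exists ws, size ws = k /\ holds z (env_cat ws E) f.
Proof.
elim: k E => [|k IH] E /=.
  by split => [Ef | [ws [/size0nil ->]]]; [exists [::] |]; rewrite env_cat0.
split => [[a /IH [ws [sw Ef]]] | [ws [sw Ef]]].
  by exists (rcons ws a); rewrite size_rcons sw -env_cat_rcons.
move: sw Ef; case/lastP: ws => // ws a; rewrite size_rcons => -[sw] Ef.
by exists a; apply/IH; exists ws; rewrite env_cat_rcons.
Qed.

Definition pairwise_disjoint_form (T : eqType) (X : T -> wterm) (xs : seq T) :=
  fconj [seq fconj [seq if x == y then FTrue else FEq (TCap (X x) (X y)) TBot | y <- xs] | x <- xs].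

Lemma holds_pairwise_disjoint_form (T : eqType) E (X : T -> wterm) xs :
  holds z E (pairwise_disjoint_form X xs) <->
  {in xs &, forall x y p, p \in teval z E (X x) -> p \in teval z E (X y) -> x = y}.
Proof.
rewrite /pairwise_disjoint_form holds_fconj_map; split => [dis x y xxs yxs p px py | dis x xxs].
  move/holds_fconj_map: (dis x xxs) => /(_ y yxs); case: eqP => // _ /= /fsetP /(_ p).
  by rewrite in_fsetI px py in_fset0.
apply/holds_fconj_map => y yxs; case: eqP => //= xy; apply/fsetP => p; rewrite in_fsetI in_fset0.
by apply/negbTE/negP => /andP[px py]; apply: xy; exact: dis px py.
Qed.

Lemma teval_var E v : teval z E (TVar v) = E v. Proof. by []. Qed.
Lemma teval_cup E t1 t2 : teval z E (TCup t1 t2) = teval z E t1 `|` teval z E t2. Proof. by []. Qed.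
Lemma teval_cap E t1 t2 : teval z E (TCap t1 t2) = teval z E t1 `&` teval z E t2. Proof. by []. Qed.
Lemma teval_max E t : teval z E (TMax t) = Wmax (teval z E t). Proof. by []. Qed.
Lemma teval_ips E t1 t2 : teval z E (TIps t1 t2) = Wips (teval z E t1) (teval z E t2). Proof. by []. Qed.
Lemma teval_c0 E : teval z E TC0 = [fset z]. Proof. by []. Qed.

End FormulaSemantics.

(** The witnesses of [run_formula] are the sets of points in each state and the
    sets of points carrying each letter; they are the variables below [nwit], and
    the free variables of the encoded relation are shifted by [nwit]. *)
Section RunFormula.
Variables (D : dfa) (n : nat).

Definition states := enum (dfa_state D).
Definition letters := bool_seqs n.
Definition nwit := (size states + size letters)%N.

Definition state_var q := TVar (index q states).
Definition letter_var a := TVar (size states + index a letters).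
Definition free_var i := TVar (nwit + i).
Definition support_term := TCup TC0 (tbigcup (map free_var (iota 0 n))).

Definition letters_disjoint := pairwise_disjoint_form letter_var letters.
Definition states_disjoint := pairwise_disjoint_form state_var states.
Definition letters_label := fconj
  [seq FEq (free_var i) (tbigcup [seq letter_var a | a <- letters & nth false a i]) | i <- iota 0 n].
Definition transitions := FEq support_term (TCup (TMax support_term)
  (tbigcup [seq tbigcup [seq TCap (TCap (state_var (dfa_step D a q')) (letter_var a))
                                  (TIps support_term (state_var q')) | q' <- states] | a <- letters])).
Definition start_transitions := FEq (TMax support_term) (TCap (TMax support_term)
  (tbigcup [seq TCap (state_var (dfa_step D a (dfa_start D))) (letter_var a) | a <- letters])).
Definition accepting_bottom :=
  FEq TC0 (TCap TC0 (tbigcup [seq state_var q | q <- states & dfa_accept D q])).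

Definition run_conditions :=
  fconj [:: letters_disjoint; letters_label; states_disjoint;
            transitions; start_transitions; accepting_bottom].
Definition run_formula := iter nwit FEx run_conditions.

Lemma pos_ex_pairwise_disjoint_form (T : eqType) (X : T -> wterm) xs :
  pos_ex (pairwise_disjoint_form X xs).
Proof.
rewrite pos_ex_fconj all_map; apply/allP => x _.
by rewrite /= pos_ex_fconj all_map; apply/allP => y _ /=; case: eqP.
Qed.

Lemma pos_ex_run_formula : pos_ex run_formula.
Proof.
rewrite /run_formula pos_ex_iter_FEx /= !pos_ex_pairwise_disjoint_form pos_ex_fconj all_map /=.
by rewrite andbT; apply/allP.
Qed.

Context {d : Order.disp_t} {I : orderType d} (z : I) (Hz : forall x : I, z <= x).
Variable e : nat -> {fset I}.

Definition support := teval z e (TCup TC0 (tbigcup (map TVar (iota 0 n)))).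

Lemma bottom_in_support : z \in support.
Proof. by rewrite /support /= in_fsetU in_fset1 eqxx. Qed.

Lemma fsubset_support i : (i < n)%N -> e i `<=` support.
Proof.
move=> iN; apply/fsubsetP => p pe; rewrite /support /= in_fsetU mem_teval_tbigcup has_map.
by apply/orP; right; apply/hasP; exists i; rewrite // mem_iota.
Qed.

Lemma letter_in_letters p : letter n e p \in letters.
Proof. by rewrite mem_bool_seqs size_letter. Qed.

Local Arguments teval : simpl never.

Section Witnesses.
Variable ws : seq {fset I}.
Hypothesis sw : size ws = nwit.
Local Notation E := (env_cat ws e).

Definition state_set q := nth fset0 ws (index q states).
Definition letter_set a := nth fset0 ws (size states + index a letters).

Lemma teval_state_var q : teval z E (state_var q) = state_set q.
Proof. by rewrite teval_var /env_cat sw /nwit ltn_addr // index_mem mem_enum. Qed.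

Lemma teval_letter_var a : a \in letters -> teval z E (letter_var a) = letter_set a.
Proof. by move=> aL; rewrite teval_var /env_cat sw /nwit ltn_add2l index_mem aL. Qed.

Lemma teval_free_var i : teval z E (free_var i) = e i.
Proof. by rewrite teval_var /env_cat sw ltnNge leq_addr /= addKn. Qed.

Lemma teval_support_term : teval z E support_term = support.
Proof.
rewrite /support_term /support !teval_cup; congr (_ `|` _).
apply/fsetP => p; rewrite !mem_teval_tbigcup !has_map.
by apply: eq_has => i; rewrite /preim /= teval_free_var teval_var.
Qed.

Section Soundness.
Hypotheses (Hld : holds z E letters_disjoint) (Hll : holds z E letters_label)
  (Hsd : holds z E states_disjoint) (Htr : holds z E transitions)
  (Hst : holds z E start_transitions).

Lemma state_set_uniq q q' p : p \in state_set q -> p \in state_set q' -> q = q'.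
Proof.
move=> pq pq'; have /holds_pairwise_disjoint_form dis := Hsd.
by apply: (dis q q' (mem_enum _ _) (mem_enum _ _) p); rewrite teval_state_var.
Qed.

Lemma letter_set_letter a p : a \in letters -> p \in letter_set a -> a = letter n e p.
Proof.
move=> aL pa; have /eqP sa : size a == n by rewrite -mem_bool_seqs.
apply: (@eq_from_nth _ false); rewrite ?size_letter // sa => i iN.
move/holds_fconj_map: Hll => /(_ i); rewrite mem_iota iN => /(_ isT) /fsetP /(_ p).
rewrite teval_free_var nth_letter // mem_teval_tbigcup has_map => ->.
apply/idP/hasP => [ai | [b]]; first by exists a; rewrite /preim /= ?mem_filter ?ai ?teval_letter_var.
rewrite mem_filter => /andP[bi bL]; rewrite /preim /= teval_letter_var // => pb.
suff -> : a = b by [].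
have /holds_pairwise_disjoint_form dis := Hld.
by apply: (dis a b aL bL p); rewrite teval_letter_var.
Qed.

Lemma state_set_run pre p s q : pre ++ p :: s = Wsorted support -> p \in state_set q ->
  q = run D (map (letter n e) (p :: s)).
Proof.
elim: s pre p q => [|p' s IH] pre p q Es pq.
  have pM : p \in Wmax support by apply: (@mem_Wmax_rcons _ _ _ pre); rewrite -cats1.
  move: Hst => /fsetP /(_ p); rewrite teval_cap !teval_max teval_support_term in_fsetI pM /=.
  rewrite mem_teval_tbigcup has_map => /esym /hasP [a aL]; rewrite /preim /=.
  rewrite teval_cap teval_state_var teval_letter_var // in_fsetI => /andP [pq' pa].
  by rewrite /run /= -(letter_set_letter aL pa); exact: state_set_uniq pq pq'.
have pP : p \in support by rewrite -mem_Wsorted -Es mem_cat mem_head orbT.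
have [_ succp] := Wsucc_cat Es.
move: Htr => /fsetP /(_ p); rewrite teval_support_term pP teval_cup teval_max teval_support_term.
rewrite in_fsetU (negbTE (notin_Wmax_cat Es)) /= mem_teval_tbigcup has_map.
move=> /esym /hasP [a aL]; rewrite /preim /= mem_teval_tbigcup has_map => /hasP [q' _].
rewrite /preim /= !teval_cap teval_ips teval_support_term !in_fsetI teval_state_var.
rewrite teval_letter_var // teval_state_var in_Wips succp => /andP[/andP[pq1 pa] /and3P[_ _ p'q']].
have Es' : rcons pre p ++ p' :: s = Wsorted support by rewrite cat_rcons.
by rewrite (state_set_uniq pq pq1) (letter_set_letter aL pa) (IH _ _ _ Es' p'q').
Qed.

Lemma accepting_bottom_sound : holds z E accepting_bottom -> accepts D (word n e support).
Proof.
move=> /fsetP /(_ z); rewrite teval_cap teval_c0 in_fsetI in_fset1 eqxx /=.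
rewrite mem_teval_tbigcup has_map => /esym /hasP [q]; rewrite mem_filter /preim /= teval_state_var.
move=> /andP [qacc _] zq.
have Es : [::] ++ z :: behead (Wsorted support) = Wsorted support.
  by rewrite -(Wsorted_bottom Hz bottom_in_support).
by rewrite /accepts /word -Es -(state_set_run Es zq).
Qed.

End Soundness.

Lemma run_conditions_sound : holds z E run_conditions -> accepts D (word n e support).
Proof. by move=> [Hld [Hll [Hsd [Htr [Hst [Hacc _]]]]]]; exact: accepting_bottom_sound. Qed.

End Witnesses.

Section Completeness.
Local Notation sP := (Wsorted support).

Definition suffix_state p := run D (map (letter n e) (drop (index p sP) sP)).
Definition run_state_set q : {fset I} := [fset p in sP | suffix_state p == q].
Definition run_letter_set a : {fset I} := [fset p in sP | letter n e p == a].
Definition run_witnesses := map run_state_set states ++ map run_letter_set letters.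
Local Notation E := (env_cat run_witnesses e).

Lemma in_run_state_set p q : (p \in run_state_set q) = (p \in support) && (suffix_state p == q).
Proof. by rewrite in_fset [LHS]inE /= mem_Wsorted. Qed.

Lemma in_run_letter_set p a : (p \in run_letter_set a) = (p \in support) && (letter n e p == a).
Proof. by rewrite in_fset [LHS]inE /= mem_Wsorted. Qed.

Lemma size_run_witnesses : size run_witnesses = nwit.
Proof. by rewrite /run_witnesses size_cat (size_map run_state_set) (size_map run_letter_set). Qed.

Lemma teval_run_state_var q : teval z E (state_var q) = run_state_set q.
Proof.
rewrite teval_state_var ?size_run_witnesses // /state_set nth_cat (size_map run_state_set).
by rewrite index_mem mem_enum (nth_map q) ?index_mem ?mem_enum // nth_index ?mem_enum.
Qed.

Lemma teval_run_letter_var a : a \in letters -> teval z E (letter_var a) = run_letter_set a.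
Proof.
move=> aL; rewrite teval_letter_var ?size_run_witnesses // /letter_set nth_cat (size_map run_state_set).
by rewrite ltnNge leq_addr /= addKn (nth_map a) ?index_mem // nth_index.
Qed.

Lemma suffix_state_cat pre p s :
  pre ++ p :: s = sP -> suffix_state p = run D (map (letter n e) (p :: s)).
Proof. by move=> Es; rewrite /suffix_state -Es index_cat_uniq ?drop_size_cat // Es Wsorted_uniq. Qed.

Lemma letters_disjoint_complete : holds z E letters_disjoint.
Proof.
apply/holds_pairwise_disjoint_form => a b aL bL p.
by rewrite !teval_run_letter_var // !in_run_letter_set => /andP[_ /eqP <-] /andP[_ /eqP <-].
Qed.

Lemma states_disjoint_complete : holds z E states_disjoint.
Proof.
apply/holds_pairwise_disjoint_form => q q' _ _ p.
by rewrite !teval_run_state_var !in_run_state_set => /andP[_ /eqP <-] /andP[_ /eqP <-].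
Qed.

Lemma letters_label_complete : holds z E letters_label.
Proof.
apply/holds_fconj_map => i; rewrite mem_iota add0n => iN /=; apply/fsetP => p.
rewrite teval_free_var ?size_run_witnesses // mem_teval_tbigcup has_map.
apply/idP/hasP => [pe | [a]].
  exists (letter n e p); first by rewrite mem_filter nth_letter // pe letter_in_letters.
  rewrite /preim /= teval_run_letter_var ?letter_in_letters // in_run_letter_set eqxx andbT.
  exact: (fsubsetP (fsubset_support iN)).
rewrite mem_filter => /andP[ai aL]; rewrite /preim /= teval_run_letter_var // in_run_letter_set.
by case/andP=> _ /eqP pa; rewrite -(nth_letter _ _ iN) pa.
Qed.

Lemma transitions_complete : holds z E transitions.
Proof.
apply/fsetP => p; rewrite teval_cup teval_max teval_support_term ?size_run_witnesses //.
rewrite in_fsetU mem_teval_tbigcup has_map.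
apply/idP/orP => [pP | [/mem_Wmax // | /hasP [a aL]]]; last first.
  rewrite /preim /= mem_teval_tbigcup has_map => /hasP [q' _]; rewrite /preim /= !teval_cap !in_fsetI.
  by rewrite teval_run_state_var in_run_state_set => /andP[/andP[/andP[]]].
have pS : p \in sP by rewrite mem_Wsorted.
have Es := esym (split_at_index pS).
case E: (drop (index p sP).+1 sP) Es => [|p' s] Es.
  by left; apply: (@mem_Wmax_rcons _ _ _ (take (index p sP) sP)); rewrite -cats1.
have [has_succ succp] := Wsucc_cat Es.
have Es' : rcons (take (index p sP) sP) p ++ p' :: s = sP by rewrite cat_rcons.
right; apply/hasP; exists (letter n e p); first exact: letter_in_letters.
rewrite /preim /= mem_teval_tbigcup has_map; apply/hasP; exists (suffix_state p'); first exact: mem_enum.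
rewrite /preim /= !teval_cap teval_ips teval_support_term ?size_run_witnesses // !in_fsetI.
rewrite !teval_run_state_var teval_run_letter_var ?letter_in_letters //.
rewrite in_run_letter_set in_Wips pP has_succ succp !in_run_state_set !eqxx /=.
rewrite (suffix_state_cat Es) (suffix_state_cat Es') eqxx !andbT.
by rewrite pP -mem_Wsorted -Es mem_cat !in_cons eqxx !orbT.
Qed.

Lemma start_transitions_complete : holds z E start_transitions.
Proof.
apply/fsetP => p; rewrite teval_cap teval_max teval_support_term ?size_run_witnesses // in_fsetI.
case pM: (p \in Wmax support) => //=; symmetry.
rewrite mem_teval_tbigcup has_map; apply/hasP; exists (letter n e p); first exact: letter_in_letters.
have pP : p \in sP by rewrite mem_Wsorted; apply: mem_Wmax.
case/lastP E: sP pP => [|s x] //= pP.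
move: pM; rewrite (Wmax_rcons E) in_fset1 => /eqP px; subst x.
rewrite /preim /= teval_cap in_fsetI teval_run_state_var teval_run_letter_var ?letter_in_letters //.
rewrite in_run_state_set in_run_letter_set -mem_Wsorted E pP eqxx andbT.
have Es : s ++ [:: p] = sP by rewrite E cats1.
by rewrite (suffix_state_cat Es) eqxx.
Qed.

Lemma accepting_bottom_complete : accepts D (word n e support) -> holds z E accepting_bottom.
Proof.
move=> acc; apply/fsetP => p; rewrite teval_cap teval_c0 in_fsetI in_fset1.
case: eqP => [-> | //] /=; symmetry.
have Es : z :: behead sP = sP by rewrite -(Wsorted_bottom Hz bottom_in_support).
rewrite mem_teval_tbigcup has_map; apply/hasP; exists (suffix_state z).
  by rewrite mem_filter mem_enum andbT (@suffix_state_cat [::] _ _ Es) Es.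
by rewrite /preim /= teval_run_state_var in_run_state_set bottom_in_support eqxx.
Qed.

Lemma run_conditions_complete : accepts D (word n e support) -> holds z E run_conditions.
Proof.
move=> acc; do !split.
- exact: letters_disjoint_complete.
- exact: letters_label_complete.
- exact: states_disjoint_complete.
- exact: transitions_complete.
- exact: start_transitions_complete.
- exact: accepting_bottom_complete.
Qed.

End Completeness.

End RunFormula.

Unset Implicit Arguments.

Theorem theorem3p6 (d : Order.disp_t) (I : orderType d) (z : I) :
  dense_lo_left0_noright z ->
  forall phi : wform, exists psi : wform,
    pos_ex psi /\
    (forall e : nat -> {fset I}, holds z e phi <-> holds z e psi).
Proof.
case=> Hz Hdense Hright phi; set n := fv_form phi.
have [D DR] := form_recognizable Hz Hdense Hright (leqnn n).
exists (run_formula D n); split; first exact: pos_ex_run_formula.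
move=> e; rewrite -(DR e _ (bottom_in_support n z e) (@fsubset_support n _ _ z e)).
rewrite holds_iter_FEx; split => [acc | [ws [sw conds]]].
  exists (run_witnesses D n z e); split; first exact: size_run_witnesses.
  exact: run_conditions_complete.
exact: (run_conditions_sound Hz sw conds).
Qed.
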